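(* Fix $\epsilon_2>0$ and $(u_\pm,v_\pm)$ with $v_\pm>0$ and $u_-<u_+$. For small $\epsilon_1>0$ let $(u^{\epsilon_1\epsilon_2},v^{\epsilon_1\epsilon_2})$ be the two-rarefaction-wave Riemann solution of the perturbed Brio system with data $(u_\pm,v_\pm)$. Then as $\epsilon_1\to0$ the solution converges to the Riemann solution of $u_t+(\tfrac12u^2)_x=0$, $v_t+(uv-\epsilon_2v)_x=0$ consisting of a contact discontinuity $x/t=u_--\epsilon_2$ followed by a rarefaction wave, with intermediate state $(u_*^{\epsilon_2},v_*^{\epsilon_2})=\big(u_-,\,v_+\exp(\tfrac{u_--u_+}{\epsilon_2})\big)$; explicitly, with $\xi=x/t$: $(u_-,v_-)$ for $\xi<u_--\epsilon_2$; $(u_-,v_*^{\epsilon_2})$ for $u_--\epsilon_2<\xi<u_-$; $\big(\xi,\,v_*^{\epsilon_2}\exp(\tfrac{\xi-u_-}{\epsilon_2})\big)$ for $u_-\le\xi\le u_+$; $(u_+,v_+)$ for $\xi>u_+$.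
   Context: Perturbed Brio system: $u_t+(\tfrac12u^2+\tfrac12\epsilon_1v^2)_x=0$, $v_t+(uv-\epsilon_2v)_x=0$, $\epsilon_1,\epsilon_2>0$, $v>0$, with Riemann data $(u_-,v_-)$ for $x<0$, $(u_+,v_+)$ for $x>0$. With $s(v)=\sqrt{\epsilon_2^2+4\epsilon_1v^2}$ and $\lambda_{1,2}=u-\tfrac12\epsilon_2\mp\tfrac12s(v)$, the two-rarefaction-wave solution has an intermediate state $(u_*,v_* )$ lying on the backward rarefaction curve $u-\tfrac12(-s(v)+\epsilon_2\ln(s(v)+\epsilon_2))=u_--\tfrac12(-s(v_-)+\epsilon_2\ln(s(v_-)+\epsilon_2))$, $v<v_-$, with $(u_+,v_+)$ on the forward rarefaction curve $u-\tfrac12(s(v)+\epsilon_2\ln(s(v)-\epsilon_2))=u_*-\tfrac12(s(v_* )+\epsilon_2\ln(s(v_* )-\epsilon_2))$, $v>v_*$; the solution consists of $(u_-,v_-)$, a 1-fan with $x/t=\lambda_1$, the state $(u_*,v_* )$, a 2-fan with $x/t=\lambda_2$, and $(u_+,v_+)$. *)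

From Stdlib Require Import Reals Lra.
Open Scope R_scope.

Definition sfun (e1 e2 v : R) : R := sqrt (e2 ^ 2 + 4 * e1 * v ^ 2).

Definition lam1 (e1 e2 u v : R) : R := u - e2 / 2 - sfun e1 e2 v / 2.
Definition lam2 (e1 e2 u v : R) : R := u - e2 / 2 + sfun e1 e2 v / 2.

(* Riemann invariants defining the backward (1-) and forward (2-) rarefaction curves *)
Definition Rinv1 (e1 e2 u v : R) : R :=
  u - (1/2) * (- sfun e1 e2 v + e2 * ln (sfun e1 e2 v + e2)).
Definition Rinv2 (e1 e2 u v : R) : R :=
  u - (1/2) * (sfun e1 e2 v + e2 * ln (sfun e1 e2 v - e2)).

(* W xi = value of the self-similar two-rarefaction-wave Riemann solution at
   xi = x/t, with intermediate state (us, vs). *)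
Definition two_rarefaction_solution (e1 e2 um vm up vp us vs : R)
    (W : R -> R * R) : Prop :=
  0 < vs /\ vs < vm /\ Rinv1 e1 e2 us vs = Rinv1 e1 e2 um vm /\
  vs < vp /\ Rinv2 e1 e2 up vp = Rinv2 e1 e2 us vs /\
  forall xi : R,
    (xi < lam1 e1 e2 um vm -> W xi = (um, vm)) /\
    (lam1 e1 e2 um vm <= xi <= lam1 e1 e2 us vs ->
       vs <= snd (W xi) <= vm /\
       Rinv1 e1 e2 (fst (W xi)) (snd (W xi)) = Rinv1 e1 e2 um vm /\
       lam1 e1 e2 (fst (W xi)) (snd (W xi)) = xi) /\
    (lam1 e1 e2 us vs < xi < lam2 e1 e2 us vs -> W xi = (us, vs)) /\
    (lam2 e1 e2 us vs <= xi <= lam2 e1 e2 up vp ->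
       vs <= snd (W xi) <= vp /\
       Rinv2 e1 e2 (fst (W xi)) (snd (W xi)) = Rinv2 e1 e2 us vs /\
       lam2 e1 e2 (fst (W xi)) (snd (W xi)) = xi) /\
    (lam2 e1 e2 up vp < xi -> W xi = (up, vp)).

Definition limit_solution (e2 um vm up vp xi : R) : R * R :=
  let vs := vp * exp ((um - up) / e2) in
  if Rlt_dec xi (um - e2) then (um, vm)
  else if Rlt_dec xi um then (um, vs)
  else if Rle_dec xi up then (xi, vs * exp ((xi - um) / e2))
  else (up, vp).

From Stdlib Require Import Reals Lra.
Open Scope R_scope.

(* As [e1 -> 0] the speed [s(v)] tends to [e2] at rate [O(e1)], uniformly for bounded [v].
   Hence the 1-Riemann invariant is [u] and the 2-Riemann invariant is [u - e2 ln v]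
   (up to an additive constant), both up to [O(e1)]: along the 1-wave [u] is nearly
   constant, and along the 2-wave [v] is nearly [v_+ exp ((u - u_+) / e2)].  Meanwhile
   [lam1 = u - e2 + O(e1)] and [lam2 = u + O(e1)], so the 1-fan collapses onto the contact
   [x/t = u_- - e2] and on the 2-fan [u] is within [O(e1)] of [x/t].  At a fixed [xi] away
   from the contact the solution therefore lies within [O(e1)] of the limit once [e1] is
   small enough for [xi] to be in the corresponding wave region. *)

Lemma Rabs_le_inv x r : Rabs x <= r -> - r <= x <= r.
Proof.
  intros Hx. pose proof (Rle_abs x) as Hle. pose proof (Rle_abs (- x)) as Hge.
  rewrite Rabs_Ropp in Hge. lra.
Qed.

Lemma ln_sub_le a b : 0 < a -> 0 < b -> ln a - ln b <= (a - b) / b.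
Proof.
  intros Ha Hb.
  assert (Hab : 0 < a / b) by (apply Rdiv_lt_0_compat; lra).
  pose proof (exp_ineq1_le (ln (a / b))) as Hexp. rewrite exp_ln in Hexp by exact Hab.
  assert (Hln : ln a = ln b + ln (a / b)).
  { rewrite <- ln_mult by lra. f_equal. field. lra. }
  replace ((a - b) / b) with (a / b - 1) by (field; lra). lra.
Qed.

Lemma Rabs_ln_sub_le a b c : 0 < c -> c <= a -> c <= b ->
  Rabs (ln a - ln b) <= Rabs (a - b) / c.
Proof.
  intros Hc Ha Hb.
  assert (Hdiv : forall x y, c <= y -> x / y <= Rabs x / c).
  { intros x y Hy. unfold Rdiv. apply Rle_trans with (Rabs x * / y).
    - apply Rmult_le_compat_r; [left; apply Rinv_0_lt_compat; lra | apply Rle_abs].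
    - apply Rmult_le_compat_l; [apply Rabs_pos | apply Rinv_le_contravar; lra]. }
  pose proof (ln_sub_le a b ltac:(lra) ltac:(lra)) as Hup.
  pose proof (ln_sub_le b a ltac:(lra) ltac:(lra)) as Hlo.
  pose proof (Hdiv (a - b) b Hb) as Hab. pose proof (Hdiv (b - a) a Ha) as Hba.
  rewrite Rabs_minus_sym in Hba. apply Rabs_le. lra.
Qed.

Lemma Rabs_exp_sub1_le t : Rabs t <= 1 / 2 -> Rabs (exp t - 1) <= 2 * Rabs t.
Proof.
  intros Ht. apply Rabs_le_inv in Ht.
  pose proof (exp_ineq1_le t) as Hlo. pose proof (exp_ineq1_le (- t)) as Hinv.
  rewrite exp_Ropp in Hinv. pose proof (exp_pos t) as Hpos.
  (* [exp t <= 1 / (1 - t) <= 1 + 2 t] for [0 <= t <= 1/2] *)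
  assert (Hup : exp t * (1 - t) <= 1).
  { apply Rmult_le_reg_r with (/ exp t); [apply Rinv_0_lt_compat; lra|].
    rewrite Rmult_comm, <- Rmult_assoc, Rinv_l by lra. lra. }
  unfold Rabs; destruct (Rcase_abs (exp t - 1)), (Rcase_abs t); nra.
Qed.

Lemma Rabs_sub_mul_exp_le v w t r : 0 < v -> 0 < w ->
  Rabs (ln v - ln w - t) <= r -> r <= 1 / 2 ->
  Rabs (v - w * exp t) <= 2 * r * (w * exp t).
Proof.
  intros Hv Hw Hq Hr. set (q := ln v - ln w - t) in *.
  assert (Ev : v = w * exp t * exp q).
  { unfold q. rewrite Rmult_assoc, <- exp_plus.
    replace (t + (ln v - ln w - t)) with (ln v + - ln w) by ring.
    rewrite exp_plus, exp_Ropp, !exp_ln by lra. field. lra. }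
  pose proof (Rabs_exp_sub1_le q ltac:(lra)) as Hexp.
  assert (Hwt : 0 < w * exp t) by (apply Rmult_lt_0_compat; [lra | apply exp_pos]).
  rewrite Ev. replace (w * exp t * exp q - w * exp t) with (w * exp t * (exp q - 1)) by ring.
  rewrite Rabs_mult, (Rabs_pos_eq (w * exp t)) by lra. nra.
Qed.

Lemma sfun_sqr e1 e2 v : 0 <= e1 -> sfun e1 e2 v * sfun e1 e2 v = e2 ^ 2 + 4 * e1 * v ^ 2.
Proof. intros He1. unfold sfun. apply sqrt_sqrt. nra. Qed.

Lemma sfun_bounds e1 e2 v M : 0 <= e1 -> 0 < e2 -> 0 <= v <= M ->
  e2 <= sfun e1 e2 v <= e2 + 2 * e1 * M ^ 2 / e2.
Proof.
  intros He1 He2 Hv.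
  assert (Hd : 0 <= 2 * e1 * M ^ 2 / e2)
    by (unfold Rdiv; apply Rmult_le_pos; [nra | left; apply Rinv_0_lt_compat; lra]).
  assert (Hv2 : v ^ 2 <= M ^ 2) by nra.
  unfold sfun. split.
  - rewrite <- (sqrt_pow2 e2) at 1 by lra. apply sqrt_le_1_alt. nra.
  - rewrite <- (sqrt_pow2 (e2 + 2 * e1 * M ^ 2 / e2)) by lra. apply sqrt_le_1_alt.
    replace ((e2 + 2 * e1 * M ^ 2 / e2) ^ 2)
      with (e2 ^ 2 + 4 * e1 * M ^ 2 + (2 * e1 * M ^ 2 / e2) ^ 2) by (field; lra).
    nra.
Qed.

(* [(s - e2) (s + e2) = 4 e1 v^2] *)
Lemma ln_sfun_sub e1 e2 v : 0 < e1 -> 0 < e2 -> 0 < v ->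
  ln (sfun e1 e2 v - e2) = ln (4 * e1) + 2 * ln v - ln (sfun e1 e2 v + e2).
Proof.
  intros He1 He2 Hv.
  pose proof (sfun_bounds e1 e2 v v ltac:(lra) He2 ltac:(lra)) as [Hs _].
  pose proof (sfun_sqr e1 e2 v ltac:(lra)) as Hsq.
  set (s := sfun e1 e2 v) in *.
  assert (E : s - e2 = 4 * e1 * (v * v) * / (s + e2)) by (field_simplify_eq; [nra | lra]).
  assert (Hvv : 0 < v * v) by nra.
  rewrite E, !ln_mult, ln_Rinv by (try apply Rinv_0_lt_compat; try apply Rmult_lt_0_compat; lra).
  lra.
Qed.

Definition rinv_offset e1 e2 v : R := (sfun e1 e2 v - e2 * ln (sfun e1 e2 v + e2)) / 2.

Lemma Rinv1_offset e1 e2 u v : Rinv1 e1 e2 u v = u + rinv_offset e1 e2 v.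
Proof. unfold Rinv1, rinv_offset. lra. Qed.

Lemma Rinv2_offset e1 e2 u v : 0 < e1 -> 0 < e2 -> 0 < v ->
  Rinv2 e1 e2 u v = u - e2 * ln v - rinv_offset e1 e2 v - e2 / 2 * ln (4 * e1).
Proof. intros He1 He2 Hv. unfold Rinv2, rinv_offset. rewrite ln_sfun_sub by lra. lra. Qed.

Lemma Rabs_rinv_offset_sub_le e1 e2 v w M : 0 <= e1 -> 0 < e2 ->
  0 <= v <= M -> 0 <= w <= M ->
  Rabs (rinv_offset e1 e2 v - rinv_offset e1 e2 w) <= 2 * e1 * M ^ 2 / e2.
Proof.
  intros He1 He2 Hv Hw.
  pose proof (sfun_bounds e1 e2 v M He1 He2 Hv) as Hsv.
  pose proof (sfun_bounds e1 e2 w M He1 He2 Hw) as Hsw.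
  set (d := 2 * e1 * M ^ 2 / e2) in *.
  assert (Hs : Rabs (sfun e1 e2 v - sfun e1 e2 w) <= d) by (apply Rabs_le; lra).
  assert (Hln : Rabs (ln (sfun e1 e2 v + e2) - ln (sfun e1 e2 w + e2)) <= d / (2 * e2)).
  { eapply Rle_trans; [apply Rabs_ln_sub_le with (c := 2 * e2); lra|].
    replace (sfun e1 e2 v + e2 - (sfun e1 e2 w + e2)) with (sfun e1 e2 v - sfun e1 e2 w) by ring.
    unfold Rdiv. apply Rmult_le_compat_r; [left; apply Rinv_0_lt_compat|]; lra. }
  apply Rabs_le_inv in Hs. apply Rabs_le_inv in Hln.
  assert (Hscale : e2 * (d / (2 * e2)) = d / 2) by (field; lra).
  apply Rabs_le. unfold rinv_offset. nra.
Qed.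

Lemma Rinv1_eq_Rabs_sub_le e1 e2 u v u' w M : 0 <= e1 -> 0 < e2 ->
  0 <= v <= M -> 0 <= w <= M -> Rinv1 e1 e2 u v = Rinv1 e1 e2 u' w ->
  Rabs (u - u') <= 2 * e1 * M ^ 2 / e2.
Proof.
  intros He1 He2 Hv Hw Heq. rewrite !Rinv1_offset in Heq.
  replace (u - u') with (rinv_offset e1 e2 w - rinv_offset e1 e2 v) by lra.
  exact (Rabs_rinv_offset_sub_le e1 e2 w v M He1 He2 Hw Hv).
Qed.

Lemma Rinv2_eq_Rabs_sub_le e1 e2 u v u' w M : 0 < e1 -> 0 < e2 ->
  0 < v <= M -> 0 < w <= M -> Rinv2 e1 e2 u v = Rinv2 e1 e2 u' w ->
  Rabs (e2 * ln v - e2 * ln w - (u - u')) <= 2 * e1 * M ^ 2 / e2.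
Proof.
  intros He1 He2 Hv Hw Heq. rewrite !Rinv2_offset in Heq by lra.
  replace (e2 * ln v - e2 * ln w - (u - u'))
    with (rinv_offset e1 e2 w - rinv_offset e1 e2 v) by lra.
  apply Rabs_rinv_offset_sub_le; lra.
Qed.

Definition pair_close (r : R) (p q : R * R) : Prop :=
  Rabs (fst p - fst q) <= r /\ Rabs (snd p - snd q) <= r.

(* How small the wave-speed error [2 e1 M^2 / e2] must be for [xi] to fall in the same
   region of the two-rarefaction solution as of the limit solution. *)
Definition limit_margin e2 um up xi : R :=
  if Rlt_dec xi (um - e2) then um - e2 - xi
  else if Rlt_dec xi um then Rmin (xi - (um - e2)) (Rmin (um - xi) (e2 / 4))
  else if Rle_dec xi up then e2 / 4
  else xi - up.

Lemma limit_margin_pos e2 um up xi : 0 < e2 -> xi <> um - e2 -> 0 < limit_margin e2 um up xi.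
Proof.
  intros He2 Hxi. unfold limit_margin.
  destruct (Rlt_dec xi (um - e2)); [lra|].
  destruct (Rlt_dec xi um); [repeat apply Rmin_pos; lra|].
  destruct (Rle_dec xi up); lra.
Qed.

Section TwoRarefactionSolution.

Variables e1 e2 um vm up vp us vs : R.
Variable W : R -> R * R.
Hypotheses (He1 : 0 < e1) (He2 : 0 < e2) (Hvm : 0 < vm) (Hvp : 0 < vp) (Hup : um <= up).
Hypothesis Hsol : two_rarefaction_solution e1 e2 um vm up vp us vs W.

Let M := Rmax vm vp.
Let c := 2 * M ^ 2 / e2.
Let d := c * e1.

Let vm_le_M : 0 < vm <= M.
Proof. split; [lra | apply Rmax_l]. Qed.

Let vp_le_M : 0 < vp <= M.
Proof. split; [lra | apply Rmax_r]. Qed.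

Let c_pos : 0 < c.
Proof.
  unfold c, Rdiv. pose proof vm_le_M.
  apply Rmult_lt_0_compat; [nra | apply Rinv_0_lt_compat; lra].
Qed.

Let d_eq : 2 * e1 * M ^ 2 / e2 = d.
Proof. unfold d, c. field. lra. Qed.

Let d_ge0 : 0 <= d.
Proof. rewrite <- d_eq. unfold Rdiv. apply Rmult_le_pos; [nra | left; apply Rinv_0_lt_compat; lra]. Qed.

Let sfun_le v : 0 <= v <= M -> e2 <= sfun e1 e2 v <= e2 + d.
Proof. rewrite <- d_eq. apply sfun_bounds; lra. Qed.

Let vs_le_M : 0 < vs <= M.
Proof. destruct Hsol as (Hvs & _ & _ & Hvsp & _). pose proof vp_le_M. lra. Qed.

Lemma us_near_um : Rabs (us - um) <= d.
Proof.
  destruct Hsol as (_ & _ & HR1 & _).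
  pose proof vs_le_M. pose proof vm_le_M.
  rewrite <- d_eq. apply (Rinv1_eq_Rabs_sub_le e1 e2 us vs um vm M); lra.
Qed.

Lemma fan_profile_error u v a : 0 < v <= M -> Rinv2 e1 e2 u v = Rinv2 e1 e2 up vp ->
  Rabs (u - a) <= d -> a <= up -> d <= e2 / 4 ->
  Rabs (v - vp * exp ((a - up) / e2)) <= 4 * vp / e2 * d.
Proof.
  intros Hv Hinv Hua Ha Hd.
  pose proof (Rinv2_eq_Rabs_sub_le e1 e2 u v up vp M He1 He2 Hv vp_le_M Hinv) as Hlog.
  rewrite d_eq in Hlog. apply Rabs_le_inv in Hlog. apply Rabs_le_inv in Hua.
  assert (Hinv_e2 : 0 < / e2) by (apply Rinv_0_lt_compat; lra).
  assert (He2_inv : e2 * / e2 = 1) by (field; lra).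
  assert (Hq : Rabs (ln v - ln vp - (a - up) / e2) <= 2 * d / e2).
  { replace (ln v - ln vp - (a - up) / e2)
      with ((e2 * ln v - e2 * ln vp - (u - up) + (u - a)) * / e2) by (field; lra).
    apply Rabs_le. unfold Rdiv. nra. }
  assert (Hexp : exp ((a - up) / e2) <= 1).
  { rewrite <- exp_0. assert (Ht : (a - up) / e2 <= 0) by (unfold Rdiv; nra).
    destruct (Rle_lt_or_eq_dec _ _ Ht) as [Hlt | ->]; [left; apply exp_increasing, Hlt | lra]. }
  assert (Hd' : 2 * d / e2 <= 1 / 2) by (unfold Rdiv; nra).
  eapply Rle_trans; [apply Rabs_sub_mul_exp_le; eauto; lra|].
  assert (0 <= vp * (d * / e2)) by (apply Rmult_le_pos; [lra | apply Rmult_le_pos; lra]).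
  unfold Rdiv in *. nra.
Qed.

Lemma W_left xi : xi < um - e2 - d -> W xi = (um, vm).
Proof.
  intros Hxi. destruct Hsol as (_ & _ & _ & _ & _ & Hreg).
  pose proof (sfun_le vm ltac:(pose proof vm_le_M; lra)).
  apply (Hreg xi). unfold lam1. lra.
Qed.

Lemma W_contact xi : um - e2 + d < xi < um - d -> W xi = (us, vs).
Proof.
  intros Hxi. destruct Hsol as (_ & _ & _ & _ & _ & Hreg).
  pose proof (sfun_le vs ltac:(pose proof vs_le_M; lra)).
  pose proof (Rabs_le_inv _ _ us_near_um).
  apply (Hreg xi). unfold lam1, lam2. lra.
Qed.

Lemma W_fan xi : um <= xi <= up -> d < e2 ->
  exists u v, W xi = (u, v) /\ 0 < v <= M /\
    Rinv2 e1 e2 u v = Rinv2 e1 e2 up vp /\ Rabs (u - xi) <= d.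
Proof.
  intros Hxi Hd. destruct Hsol as (Hvs & Hvsm & _ & Hvsp & HR2 & Hreg).
  destruct (Hreg xi) as (_ & _ & Hconst & Hfan & _).
  pose proof (sfun_le vs ltac:(pose proof vs_le_M; lra)) as Hs.
  pose proof (sfun_le vp ltac:(pose proof vp_le_M; lra)) as Hsp.
  pose proof (Rabs_le_inv _ _ us_near_um) as Hus.
  destruct (Rlt_le_dec xi (lam2 e1 e2 us vs)) as [Hlt | Hge].
  - exists us, vs. unfold lam1, lam2 in *.
    split; [apply Hconst; lra|]. split; [exact vs_le_M|].
    split; [congruence | apply Rabs_le; lra].
  - destruct Hfan as (Hv & Hinv & Hlam); [unfold lam2 in *; lra|].
    exists (fst (W xi)), (snd (W xi)). split; [apply surjective_pairing|].
    pose proof vp_le_M. split; [lra|]. split; [congruence|].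
    pose proof (sfun_le (snd (W xi)) ltac:(lra)). unfold lam2 in Hlam.
    apply Rabs_le. lra.
Qed.

Lemma W_right xi : up + d < xi -> W xi = (up, vp).
Proof.
  intros Hxi. destruct Hsol as (_ & _ & _ & _ & _ & Hreg).
  pose proof (sfun_le vp ltac:(pose proof vp_le_M; lra)).
  apply (Hreg xi). unfold lam2. lra.
Qed.

Lemma W_close_limit_solution xi : e1 < limit_margin e2 um up xi / c ->
  pair_close ((1 + 4 * vp / e2) * c * e1) (W xi) (limit_solution e2 um vm up vp xi).
Proof.
  intros Hlt.
  assert (Hd : d < limit_margin e2 um up xi).
  { apply (Rmult_lt_compat_r c) in Hlt; [|exact c_pos].
    replace (limit_margin e2 um up xi / c * c) with (limit_margin e2 um up xi) in Hlt
      by (field; pose proof c_pos; lra).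
    unfold d. lra. }
  assert (Hr : (1 + 4 * vp / e2) * c * e1 = d + 4 * vp / e2 * d) by (unfold d; ring).
  assert (Hvd : 0 <= 4 * vp / e2 * d)
    by (unfold Rdiv; apply Rmult_le_pos; [apply Rmult_le_pos; [lra | left; apply Rinv_0_lt_compat] |]; lra).
  rewrite Hr. unfold pair_close, limit_margin, limit_solution in *.
  destruct (Rlt_dec xi (um - e2)).
  { rewrite W_left by lra. simpl. rewrite !Rminus_diag, Rabs_R0. lra. }
  destruct (Rlt_dec xi um).
  { pose proof (Rmin_l (xi - (um - e2)) (Rmin (um - xi) (e2 / 4))).
    pose proof (Rmin_r (xi - (um - e2)) (Rmin (um - xi) (e2 / 4))).
    pose proof (Rmin_l (um - xi) (e2 / 4)). pose proof (Rmin_r (um - xi) (e2 / 4)).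
    rewrite W_contact by lra. simpl. split; [pose proof us_near_um; lra|].
    destruct Hsol as (_ & _ & _ & _ & HR2 & _).
    pose proof (fan_profile_error us vs um vs_le_M (eq_sym HR2) us_near_um ltac:(lra) ltac:(lra)).
    lra. }
  destruct (Rle_dec xi up).
  { destruct (W_fan xi) as (u & v & -> & Hv & Hinv & Hu); [lra | lra |].
    simpl. split; [lra|].
    rewrite Rmult_assoc, <- exp_plus.
    replace ((um - up) / e2 + (xi - um) / e2) with ((xi - up) / e2) by (field; lra).
    pose proof (fan_profile_error u v xi Hv Hinv Hu r ltac:(lra)). lra. }
  rewrite W_right by lra. simpl. rewrite !Rminus_diag, Rabs_R0. lra.
Qed.

End TwoRarefactionSolution.

Lemma limit1_in_of_linear_bound (f : R -> R) (D : R -> Prop) (l K eta : R) :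
  0 < eta -> (forall x, D x -> 0 < x) ->
  (forall x, D x -> x < eta -> Rabs (f x - l) <= K * x) -> limit1_in f D l 0.
Proof.
  intros Heta Hpos Hbound eps Heps.
  pose proof (Rabs_pos K) as HK.
  assert (Hr : 0 < eps / (Rabs K + 1)) by (apply Rdiv_lt_0_compat; lra).
  exists (Rmin eta (eps / (Rabs K + 1))). split; [apply Rmin_pos; lra|].
  intros x [Dx Hx]. simpl in *. unfold R_dist in *.
  pose proof (Hpos x Dx) as Hx0.
  rewrite Rminus_0_r, Rabs_pos_eq in Hx by lra.
  pose proof (Rmin_l eta (eps / (Rabs K + 1))). pose proof (Rmin_r eta (eps / (Rabs K + 1))).
  assert (Heps' : eps / (Rabs K + 1) * (Rabs K + 1) = eps) by (field; lra).
  pose proof (Rle_abs K).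
  eapply Rle_lt_trans; [apply Hbound; [exact Dx | lra]|]. nra.
Qed.

Theorem theorem6p2 (e2 um vm up vp : R) :
  0 < e2 -> 0 < vm -> 0 < vp -> um < up ->
  forall (delta : R) (us vs : R -> R) (W : R -> R -> R * R),
    0 < delta ->
    (forall e1, 0 < e1 < delta ->
       two_rarefaction_solution e1 e2 um vm up vp (us e1) (vs e1) (W e1)) ->
    forall xi : R, xi <> um - e2 ->
      limit1_in (fun e1 => fst (W e1 xi)) (fun e1 => 0 < e1 < delta)
                (fst (limit_solution e2 um vm up vp xi)) 0 /\
      limit1_in (fun e1 => snd (W e1 xi)) (fun e1 => 0 < e1 < delta)
                (snd (limit_solution e2 um vm up vp xi)) 0.
Proof.
  intros He2 Hvm Hvp Hup delta us vs W _ Hsol xi Hxi.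
  set (c := 2 * Rmax vm vp ^ 2 / e2).
  assert (Hc : 0 < c).
  { unfold c, Rdiv. pose proof (Rmax_l vm vp).
    apply Rmult_lt_0_compat; [nra | apply Rinv_0_lt_compat; lra]. }
  pose proof (limit_margin_pos e2 um up xi He2 Hxi) as Hm.
  set (eta := limit_margin e2 um up xi / c).
  assert (Heta : 0 < eta) by (apply Rdiv_lt_0_compat; lra).
  assert (Hclose : forall e1, 0 < e1 < delta -> e1 < eta ->
    pair_close ((1 + 4 * vp / e2) * c * e1) (W e1 xi) (limit_solution e2 um vm up vp xi)).
  { intros e1 He1 Hlt.
    apply W_close_limit_solution with (us e1) (vs e1); [lra.. | apply Hsol; lra | exact Hlt]. }
  split; apply (limit1_in_of_linear_bound _ _ _ ((1 + 4 * vp / e2) * c) eta Heta);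
    try (intros x Hx; apply Hx); intros e1 He1 Hlt; apply (Hclose e1 He1 Hlt).
Qed.
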